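(* Let $G$ be a finite impartial game that is nimber-like. Then $G\equiv *n$ for some nonnegative integer $n$.
   Context: A game is identified with its set of options (written $\{g_1,\dots,g_k\}$); $\mathbf{E}$ denotes the game with no options, and $G\equiv H$ means $G$ and $H$ have the same set of options, recursively. Nimbers: $*0\equiv\mathbf{E}$ and $*n\equiv\{*0,*1,\dots,*(n-1)\}$. A game $G$ has hereditary transitivity if whenever $g$ is an option of $G$ and $g'$ is an option of $g$, then $g'$ is (identical to) an option of $G$. A game is nimber-like if it has hereditary transitivity and each of its options is nimber-like (recursively; equivalently, $G$ and every game reachable from $G$ by a sequence of moves has hereditary transitivity). *)

From mathcomp Require Import all_boot.
Set Implicit Arguments. Unset Strict Implicit. Unset Printing Implicit Defensive.

(* The list representation is only a presentation: games are compared with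
   the recursive identity [gid] (same SET of options, recursively). *)
Inductive game : Type := Game : seq game -> game.

Definition options (G : game) : seq game := let: Game gs := G in gs.

Fixpoint gid (G H : game) {struct G} : bool :=
  let: Game gs := G in
  let: Game hs := H in
  all (fun g => has (fun h => gid g h) hs) gs &&
  all (fun h => has (fun g => gid g h) gs) hs.

Definition is_option (g G : game) : bool := has (gid g) (options G).

Fixpoint nim (n : nat) : game :=
  match n with
  | 0 => Game [::]
  | k.+1 => Game (rcons (options (nim k)) (nim k))
  end.

Definition hered_trans (G : game) : bool :=
  all (fun g => all (fun g' => is_option g' G) (options g)) (options G).

Fixpoint nimber_like (G : game) : bool :=
  let: Game gs := G in
  hered_trans (Game gs) && all nimber_like gs.

From mathcomp Require Import all_boot.
From Stdlib Require List.

(* By induction every option of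
   G is identical to some nimber *n, so the set S of those n is finite.  We
   show (mex lemma [gid_nim_mex]) that a game all of whose options are
   identical to nimbers and whose set S is downward closed is identical to *m, where m is
   the least natural number outside S (its minimum excluded value).
   Downward closure of S is exactly what hereditary transitivity provides:
   *j is an option of *k for j < k, and an option of an option of a
   hereditarily transitive game is again (identical to) an option of it. *)

Fixpoint game_ind_in (P : game -> Prop)
  (IH : forall gs, (forall g, List.In g gs -> P g) -> P (Game gs)) (G : game) :
  P G :=
  let: Game gs := G in
  IH gs ((fix in_list (l : seq game) : forall g, List.In g l -> P g :=
    match l return forall g, List.In g l -> P g with
    | [::] => fun g (F : False) => False_ind _ F
    | x :: l' => fun g (Hin : x = g \/ List.In g l') =>
        match Hin with
        | or_introl e => eq_ind x P (game_ind_in P IH x) g e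
        | or_intror i => in_list l' g i
        end
    end) gs).

Lemma has_In (T : Type) (p : pred T) (s : seq T) :
  has p s <-> exists x, List.In x s /\ p x.
Proof.
elim: s => [|x s IH] /=; first by split => // [[x []]].
split=> [/orP [px|/IH [y [Hy py]]]|[y [[<-|Hy] py]]]; first by exists x; auto.
- by exists y; auto.
- by rewrite py.
- by apply/orP; right; apply/IH; exists y.
Qed.

Lemma all_In (T : Type) (p : pred T) (s : seq T) :
  all p s <-> forall x, List.In x s -> p x.
Proof.
elim: s => [|x s IH] /=; first by split.
split=> [/andP [px /IH Hs] y [<-|Hy]|Hs]; [by [] | exact: Hs |].
by rewrite Hs /=; [apply/IH => y Hy; apply: Hs; right | left].
Qed.

Lemma gidP G H : gid G H <->
  (forall g, List.In g (options G) -> exists h, List.In h (options H) /\ gid g h) /\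
  (forall h, List.In h (options H) -> exists g, List.In g (options G) /\ gid g h).
Proof.
case: G H => [gs] [hs] /=; split.
  by case/andP => /all_In A /all_In B; split=> [g /A|h /B] /has_In.
move=> [A B]; apply/andP; split; apply/all_In.
  by move=> g /A ?; apply/has_In.
by move=> h /B ?; apply/has_In.
Qed.

Lemma is_optionP g G :
  is_option g G <-> exists h, List.In h (options G) /\ gid g h.
Proof. exact: has_In. Qed.

Lemma gid_refl G : gid G G.
Proof.
elim/game_ind_in: G => gs IH; apply/gidP.
by split=> g Hg; exists g; split => //; exact: IH.
Qed.

Lemma gid_sym {G H} : gid G H -> gid H G.
Proof.
elim/game_ind_in: G H => gs IH [hs] /gidP [A B]; apply/gidP; split.
  by move=> h /B [g [Hg gh]]; exists g; split => //; exact: IH.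
by move=> g /[dup] Hg /A [h [Hh gh]]; exists h; split => //; exact: IH.
Qed.

Lemma gid_trans {G H K} : gid G H -> gid H K -> gid G K.
Proof.
elim/game_ind_in: G H K => gs IH [hs] [ks] /gidP [A B] /gidP [C D].
apply/gidP; split.
  move=> g /[dup] Hg /A [h [/C [k [Hk hk]] gh]].
  by exists k; split => //; exact: IH hk.
move=> k /D [h [/B [g [Hg gh]] hk]].
by exists g; split => //; exact: IH hk.
Qed.

Lemma is_option_trans {G h h'} :
  hered_trans G -> is_option h G -> is_option h' h -> is_option h' G.
Proof.
move=> /all_In HT /is_optionP [g [Hg /gidP [hg _]]] /is_optionP [x [Hx h'x]].
have [y [Hy xy]] := hg x Hx.
have /all_In/(_ y Hy)/is_optionP [z [Hz yz]] := HT g Hg.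
apply/is_optionP; exists z; split => //.
exact: gid_trans h'x (gid_trans xy yz).
Qed.

Lemma options_nim h k :
  List.In h (options (nim k)) <-> exists j, j < k /\ h = nim j.
Proof.
elim: k h => [|k IH] h /=; first by split => // [[j []]].
rewrite -cats1 List.in_app_iff IH /=; split.
  move=> [[j [jk ->]]|[<-|[]]]; last by exists k.
  by exists j; split => //; exact: ltnW.
move=> [j [jk ->]]; move: jk; rewrite ltnS leq_eqVlt => /predU1P [->|jk].
  by right; left.
by left; exists j.
Qed.

Lemma is_option_nim {j k} : j < k -> is_option (nim j) (nim k).
Proof.
move=> jk; apply/is_optionP; exists (nim j); split; last exact: gid_refl.
by apply/options_nim; exists j.
Qed.

Lemma nim_inj {a b} : gid (nim a) (nim b) -> a = b.
Proof.
elim/ltn_ind: a b => a IH b /gidP [A B].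
case: (ltngtP a b) => // [a_lt_b|b_lt_a].
- have /B [_ [/options_nim [k [ka ->]] ka']] :
    List.In (nim a) (options (nim b)) by apply/options_nim; exists a.
  by move: (ka); rewrite (IH k ka a ka') ltnn.
- have /A [_ [/options_nim [k [kb ->]] bk]] :
    List.In (nim b) (options (nim a)) by apply/options_nim; exists b.
  by move: kb; rewrite (IH b b_lt_a k bk) ltnn.
Qed.

Lemma nim_values_bounded {gs : seq game} :
  (forall g, List.In g gs -> exists n, gid g (nim n)) ->
  exists N, forall n g, List.In g gs -> gid g (nim n) -> n < N.
Proof.
elim: gs => [|x s IH] Hnim; first by exists 0 => n g [].
have [N HN] := IH (fun g Hg => Hnim g (or_intror Hg)).
have [m xm] := Hnim x (or_introl erefl).
exists (maxn N m.+1) => n g [<-|Hg] gn; rewrite leq_max.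
  by rewrite (nim_inj (gid_trans (gid_sym gn) xm)) ltnSn orbT.
by rewrite (HN n g Hg gn).
Qed.

Lemma gid_nim_mex G :
  (forall g, List.In g (options G) -> exists n, gid g (nim n)) ->
  (forall j k, j < k -> is_option (nim k) G -> is_option (nim j) G) ->
  exists m, gid G (nim m).
Proof.
move=> Hnim closed; pose S n := is_option (nim n) G.
have [N HN] := nim_values_bounded Hnim.
have missing : exists n, ~~ S n.
  exists N; apply/negP => /is_optionP [g [Hg Ng]].
  by have := HN N g Hg (gid_sym Ng); rewrite ltnn.
have [m nSm m_min] := ex_minnP missing.
have S_lt k : S k -> k < m.
  move=> Sk; rewrite ltnNge; apply: contra nSm.
  by rewrite leq_eqVlt => /predU1P [->//|mk]; exact: closed mk Sk.
have lt_S k : k < m -> S k.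
  by move=> km; apply/negPn/negP => /m_min; rewrite leqNgt km.
exists m; apply/gidP; split.
  move=> g Hg; have [n gn] := Hnim g Hg.
  exists (nim n); split => //; apply/options_nim; exists n; split => //.
  by apply/S_lt/is_optionP; exists g; split => //; exact: gid_sym.
move=> h /options_nim [j [jm ->]].
have /is_optionP [g [Hg jg]] := lt_S j jm.
by exists g; split => //; exact: gid_sym.
Qed.

Theorem theorem3p3 (G : game) : nimber_like G -> exists n : nat, gid G (nim n).
Proof.
elim/game_ind_in: G => gs IH /andP [HT /all_In NL].
apply: gid_nim_mex => [g Hg|j k jk Sk].
- exact: IH g Hg (NL g Hg).
- exact: is_option_trans HT Sk (is_option_nim jk).
Qed.
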